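(* For any class $K$ of structures, $PF\le_c K$ if and only if there is a computable Friedberg enumeration $(\mathcal{A}_n)_{n\in\omega}$ of some subclass of $K$ containing infinitely many isomorphism types.
   Context: Conventions: every structure is for a finite relational language with universe a subset of $\omega$; a class is a collection of structures for one fixed language closed under isomorphism (so subclasses are also taken closed under isomorphism). $D(\mathcal{A})$ is the atomic diagram of $\mathcal{A}$. A computable transformation from $K$ to $K'$ is a c.e. set $\Phi$ of pairs $(\alpha,\varphi)$, $\alpha$ a finite subset of the atomic diagram of a finite structure in the language of $K$, $\varphi$ an atomic sentence or negation of one in the language of $K'$, such that for every $\mathcal{A}\in K$, $\{\varphi:(\exists\alpha\subseteq D(\mathcal{A}))(\alpha,\varphi)\in\Phi\}=D(\mathcal{B})$ for some $\mathcal{B}\in K'$. A computable embedding is a computable transformation with $\mathcal{A}\cong\mathcal{A}'\iff\Phi(\mathcal{A})\cong\Phi(\mathcal{A}')$; $K\le_c K'$ means one exists. $PF$ is the class of finite prime fields (fields of prime order, in a relational language). A computable enumeration of a class $K$ is a c.e. set $\mathcal{E}$ of pairs $(n,\varphi)$ such that for each $n$, $\{\varphi:(n,\varphi)\in\mathcal{E}\}=D(\mathcal{A}_n)$ for some $\mathcal{A}_n\in K$, and every member of $K$ is isomorphic to some $\mathcal{A}_n$; it is Friedberg if each isomorphism type in $K$ is represented by exactly one $n$. *)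

From Stdlib Require List.
From mathcomp Require Import all_boot.

Set Implicit Arguments. Unset Strict Implicit. Unset Printing Implicit Defensive.

Inductive prf : Type :=
  | PZero
  | PSucc
  | PProj (i : nat)
  | PComp (f : prf) (gs : seq prf)
  | PPrec (f g : prf)
  | PMin (f : prf).

Inductive peval : prf -> seq nat -> nat -> Prop :=
  | ev_zero args : peval PZero args 0
  | ev_succ args : peval PSucc args (nth 0 args 0).+1
  | ev_proj i args : peval (PProj i) args (nth 0 args i)
  | ev_comp f gs args ws v :
      List.Forall2 (fun g w => peval g args w) gs ws ->
      peval f ws v -> peval (PComp f gs) args v
  | ev_prec0 f g rest v :
      peval f rest v -> peval (PPrec f g) (0 :: rest) v
  | ev_precS f g n rest u v :
      peval (PPrec f g) (n :: rest) u ->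
      peval g (n :: u :: rest) v ->
      peval (PPrec f g) (n.+1 :: rest) v
  | ev_min f args n :
      peval f (n :: args) 0 ->
      (forall m, m < n -> exists w, peval f (m :: args) w.+1) ->
      peval (PMin f) args n.

Definition ce (P : nat -> Prop) : Prop :=
  exists e : prf, forall n, P n <-> exists v, peval e [:: n] v.

Definition cpair (a b : nat) : nat := (a + b) * (a + b).+1 %/ 2 + b.

Fixpoint code_seq (s : seq nat) : nat :=
  match s with
  | nil => 0
  | x :: s' => (cpair x (code_seq s')).+1
  end.

Definition ce_by (X : Type) (code : X -> nat) (P : X -> Prop) : Prop :=
  ce (fun n => exists x, code x = n /\ P x).

(* A finite relational language: the list of arities of its relation
   symbols R_0, ..., R_{k-1}.  Equality is always available. *)
Definition language := seq nat.

(* A structure with universe a subset of omega.  Only relations of the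
   language, on tuples of the right arity from the universe, matter. *)
Record structure := Structure {
  dom : nat -> Prop;
  rel : nat -> seq nat -> Prop
}.

Inductive atom : Type :=
  | AEq (a b : nat)
  | ARel (i : nat) (args : seq nat).

(* literal: (true, a) is the atomic sentence a, (false, a) is its negation;
   constants are the natural numbers (names of elements of omega). *)
Definition literal := (bool * atom)%type.

Definition wf_atom (L : language) (a : atom) : Prop :=
  match a with
  | AEq _ _ => True
  | ARel i args => i < size L /\ size args = nth 0 L i
  end.

Definition wf_lit (L : language) (l : literal) : Prop := wf_atom L l.2.

Definition consts (a : atom) : seq nat :=
  match a with
  | AEq x y => [:: x; y]
  | ARel _ args => args
  end.

Definition holds (A : structure) (a : atom) : Prop :=
  match a with
  | AEq x y => x = y
  | ARel i args => rel A i args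
  end.

Definition diag (L : language) (A : structure) (l : literal) : Prop :=
  wf_lit L l /\ List.Forall (dom A) (consts l.2) /\
  (if l.1 then holds A l.2 else ~ holds A l.2).

Definition iso (L : language) (A B : structure) : Prop :=
  exists f : nat -> nat,
    (forall x, dom A x -> dom B (f x)) /\
    (forall x y, dom A x -> dom A y -> f x = f y -> x = y) /\
    (forall y, dom B y -> exists x, dom A x /\ f x = y) /\
    (forall i args, i < size L -> size args = nth 0 L i ->
       List.Forall (dom A) args -> (rel A i args <-> rel B i (map f args))).

Definition iso_closed (L : language) (K : structure -> Prop) : Prop :=
  forall A B, K A -> iso L A B -> K B.

Definition finite_structure (A : structure) : Prop :=
  exists n, forall x, dom A x -> x < n.

Definition code_atom (a : atom) : nat :=
  match a with
  | AEq x y => cpair 0 (cpair x y)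
  | ARel i args => cpair 1 (cpair i (code_seq args))
  end.

Definition code_lit (l : literal) : nat := cpair (nat_of_bool l.1) (code_atom l.2).

Definition code_rule (r : seq literal * literal) : nat :=
  cpair (code_seq (map code_lit r.1)) (code_lit r.2).

Definition phi_image (L : language) (L' : language)
    (Phi : seq literal * literal -> Prop) (A B : structure) : Prop :=
  forall l, (exists alpha, Phi (alpha, l) /\ List.Forall (diag L A) alpha)
            <-> diag L' B l.

Definition comp_transformation (L L' : language)
    (K K' : structure -> Prop) (Phi : seq literal * literal -> Prop) : Prop :=
  ce_by code_rule Phi /\
  (forall alpha l, Phi (alpha, l) ->
     (exists F, finite_structure F /\ List.Forall (diag L F) alpha) /\
     wf_lit L' l) /\
  (forall A, K A -> exists B, K' B /\ phi_image L L' Phi A B).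

Definition comp_embedding (L L' : language)
    (K K' : structure -> Prop) (Phi : seq literal * literal -> Prop) : Prop :=
  comp_transformation L L' K K' Phi /\
  (forall A A' B B', K A -> K A' ->
     phi_image L L' Phi A B -> phi_image L L' Phi A' B' ->
     (iso L A A' <-> iso L' B B')).

Definition le_c (L L' : language) (K K' : structure -> Prop) : Prop :=
  exists Phi, comp_embedding L L' K K' Phi.

(*    R_0 = graph of +, R_1 = graph of *, R_2 = {0}, R_3 = {1}.       *)

Definition L_field : language := [:: 3; 3; 1; 1].

Definition Zp_struct (p : nat) : structure :=
  Structure (fun x => x < p)
    (fun i args =>
       match i, args with
       | 0, a :: b :: c :: nil => (a + b) %% p = c
       | 1, a :: b :: c :: nil => (a * b) %% p = c
       | 2, a :: nil => a = 0
       | 3, a :: nil => a = 1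
       | _, _ => False
       end).

Definition PF (A : structure) : Prop :=
  exists p, prime p /\ iso L_field A (Zp_struct p).

Definition code_enum (r : nat * literal) : nat := cpair r.1 (code_lit r.2).

Definition enum_member (L : language) (E : nat * literal -> Prop)
    (n : nat) (A : structure) : Prop :=
  forall l, E (n, l) <-> diag L A l.

Definition comp_enumeration (L : language) (C : structure -> Prop)
    (E : nat * literal -> Prop) : Prop :=
  ce_by code_enum E /\
  (forall n, exists A, C A /\ enum_member L E n A) /\
  (forall A, C A -> exists n B, enum_member L E n B /\ iso L A B).

Definition friedberg_enumeration (L : language) (C : structure -> Prop)
    (E : nat * literal -> Prop) : Prop :=
  comp_enumeration L C E /\
  (forall n m An Am, enum_member L E n An -> enum_member L E m Am ->
     iso L An Am -> n = m).

Definition subclass (L : language) (C K : structure -> Prop) : Prop :=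
  iso_closed L C /\ (forall A, C A -> K A).

Definition infinitely_many_iso_types (L : language) (C : structure -> Prop)
  : Prop :=
  forall N, exists f : nat -> structure,
    (forall i, i < N -> C (f i)) /\
    (forall i j, i < N -> j < N -> iso L (f i) (f j) -> i = j).

From Pilot Require Import Defs.
From mathcomp Require Import all_boot zify.
From Stdlib Require Import Lia Classical IndefiniteDescription.
Set Implicit Arguments. Unset Strict Implicit. Unset Printing Implicit Defensive.

(* (=>) If Phi embeds PF into K, enumerate A_n := Phi(Z/q_n), q_n the n-th
   prime.  The enumeration is c.e. because Phi is c.e. and the atomic
   diagram of Z/p is decidable uniformly in p; it is Friedberg because Phi
   preserves and reflects isomorphism and the Z/q_n are pairwise
   non-isomorphic.  (<=) Given a Friedberg enumeration (A_n), map a copy of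
   Z/p to A_p.  A copy of Z/p is recognised from finite information by a
   "chain" 1, 1+1, ..., p*1 = 0 of p distinct elements, and such a chain of
   length q with q prime exists only when q = p. *)

(* Induction principle for [prf] that sees through the nested list of
   composed programs in [PComp]. *)
Section PrfInd.
Variable P : prf -> Prop.
Hypothesis Hzero : P PZero.
Hypothesis Hsucc : P PSucc.
Hypothesis Hproj : forall i, P (PProj i).
Hypothesis Hcomp : forall f gs, P f -> List.Forall P gs -> P (PComp f gs).
Hypothesis Hprec : forall f g, P f -> P g -> P (PPrec f g).
Hypothesis Hmin : forall f, P f -> P (PMin f).
Fixpoint prf_nested_ind (e : prf) : P e :=
  match e with
  | PZero => Hzero | PSucc => Hsucc | PProj i => Hproj i
  | PComp f gs => Hcomp (prf_nested_ind f)
      ((fix go gs := match gs return List.Forall P gs with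
                     | nil => List.Forall_nil _
                     | g :: gs' => List.Forall_cons _ (prf_nested_ind g) (go gs') end) gs)
  | PPrec f g => Hprec (prf_nested_ind f) (prf_nested_ind g)
  | PMin f => Hmin (prf_nested_ind f)
  end.
End PrfInd.

Definition functional (e : prf) :=
  forall args v v', peval e args v -> peval e args v' -> v = v'.

Lemma Forall2_functional gs : List.Forall functional gs -> forall args ws ws',
  List.Forall2 (fun g w => peval g args w) gs ws ->
  List.Forall2 (fun g w => peval g args w) gs ws' -> ws = ws'.
Proof.
elim=> [|g gs' Hg _ IH] args ws ws' H1 H2; first by inversion H1; inversion H2.
inversion H1 as [|? y ? l' Hy Hl]; subst; inversion H2 as [|? y' ? l'' Hy' Hl']; subst.
by rewrite (Hg _ _ _ Hy Hy') (IH _ _ _ Hl Hl').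
Qed.

Lemma peval_functional e : functional e.
Proof.
elim/prf_nested_ind: e.
- by move=> a v v' H1 H2; inversion H1; inversion H2; subst.
- by move=> a v v' H1 H2; inversion H1; inversion H2; subst.
- by move=> i a v v' H1 H2; inversion H1; inversion H2; subst.
- move=> f gs Hf Hgs a v v' H1 H2.
  inversion H1 as [| | |? ? ? ws ? Hw Hfw| | |]; subst.
  inversion H2 as [| | |? ? ? ws' ? Hw' Hfw'| | |]; subst.
  have E := Forall2_functional Hgs Hw Hw'; subst; exact: Hf _ _ _ Hfw Hfw'.
- move=> f g Hf Hg a v v' H1 H2.
  case: a H1 H2 => [|n rest] H1 H2; first by inversion H1.
  elim: n v v' H1 H2 => [|n IH] v v' H1 H2.
  + inversion H1; subst; inversion H2; subst; exact: Hf _ _ _ H5 H6.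
  + inversion H1 as [| | | |? ? ? ? Ha|? ? ? ? u ? Hu Hgu|]; subst.
    inversion H2 as [| | | |? ? ? ? Ha'|? ? ? ? u' ? Hu' Hgu'|]; subst.
    have Eu := IH _ _ Hu Hu'; subst; exact: Hg _ _ _ Hgu Hgu'.
- move=> f Hf a v v' H1 H2; inversion H1; subst; inversion H2; subst.
  case: (ltngtP v v') => // Hlt.
  + by case: (H5 _ Hlt) => w Hw; have := Hf _ _ _ H0 Hw.
  + by case: (H3 _ Hlt) => w Hw; have := Hf _ _ _ H4 Hw.
Qed.

(* All concrete algorithms below are assembled from these combinators, so
   that their correctness is a statement about [den] alone. *)
Record tprf := TP { tp :> prf; den : seq nat -> nat;
                    tp_ok : forall args, peval tp args (den args) }.

Definition tzero : tprf := @TP PZero (fun _ => 0) (fun a => ev_zero a).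
Definition tproj i : tprf := @TP (PProj i) (fun a => nth 0 a i) (fun a => ev_proj i a).
Definition tsucc : tprf := @TP PSucc (fun a => (nth 0 a 0).+1) (fun a => ev_succ a).

Lemma Forall2_den (Gs : seq tprf) a :
  List.Forall2 (fun g w => peval g a w) (map tp Gs) (map (fun G => den G a) Gs).
Proof. elim: Gs => [|G Gs IH] /=; constructor => //; exact: tp_ok. Qed.

Definition tcomp (F : tprf) (Gs : seq tprf) : tprf :=
  @TP (PComp F (map tp Gs)) (fun a => den F (map (fun G => den G a) Gs))
      (fun a => ev_comp (Forall2_den Gs a) (tp_ok F _)).

Fixpoint precF (F G : seq nat -> nat) n rest :=
  match n with 0 => F rest | k.+1 => G (k :: precF F G k rest :: rest) end.

Lemma peval_precF (F G : tprf) n rest :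
  peval (PPrec F G) (n :: rest) (precF (den F) (den G) n rest).
Proof. by elim: n => [|n IH] /=; [constructor; exact: tp_ok | econstructor; [exact: IH | exact: tp_ok]]. Qed.

Definition trec (F G N : tprf) (Rs : seq tprf) : tprf :=
  @TP (PComp (PPrec F G) (map tp (N :: Rs)))
      (fun a => precF (den F) (den G) (den N a) (map (fun R => den R a) Rs))
      (fun a => ev_comp (Forall2_den (N :: Rs) a) (peval_precF _ _ _ _)).

Definition mu_total (B : tprf) := forall rs, exists i, den B (i :: rs) == 0.

Definition muF (B : tprf) (H : mu_total B) rs := ex_minn (H rs).

Lemma muF_spec B H rs : den B (@muF B H rs :: rs) = 0 /\
   forall j, j < @muF B H rs -> den B (j :: rs) <> 0.
Proof.
rewrite /muF; case: ex_minnP => n /eqP Hn Hmin; split => // j Hj Hz.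
by have := Hmin j (introT eqP Hz); rewrite leqNgt Hj.
Qed.

Lemma muF_eq B H rs n : den B (n :: rs) = 0 -> (forall j, j < n -> den B (j :: rs) <> 0) ->
  @muF B H rs = n.
Proof.
move=> H1 H2; have [H3 H4] := muF_spec H rs.
by case: (ltngtP (muF H rs) n) => // [/H2|/H4].
Qed.

Lemma peval_min_witness (B : tprf) args n :
  den B (n :: args) = 0 -> (forall m, m < n -> den B (m :: args) <> 0) ->
  peval (PMin B) args n.
Proof.
move=> Hn Hlt; constructor; first by rewrite -Hn; exact: tp_ok.
move=> m /Hlt Hm; exists (den B (m :: args)).-1.
by rewrite prednK ?lt0n; [exact: tp_ok | apply/eqP].
Qed.

Lemma pmin_halts (B : tprf) args :
  (exists n, peval (PMin B) args n) <-> exists t, den B (t :: args) = 0.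
Proof.
split => [[n Hn]|[t Ht]].
  inversion Hn as [| | | | | |? ? ? Hz Hlt]; subst.
  by exists n; exact: (peval_functional (tp_ok B _) Hz).
have Ex : exists t, den B (t :: args) == 0 by exists t; apply/eqP.
case: (ex_minnP Ex) => n /eqP Hn Hmin; exists n; apply: peval_min_witness => // m Hm /eqP.
by move/Hmin; rewrite leqNgt Hm.
Qed.

Definition tmu (B : tprf) (H : mu_total B) (Rs : seq tprf) : tprf :=
  @TP (PComp (PMin B) (map tp Rs)) (fun a => muF H (map (fun R => den R a) Rs))
      (fun a => ev_comp (Forall2_den Rs a)
         (peval_min_witness (muF_spec H _).1 (muF_spec H _).2)).

Ltac simpl_env := cbn [map nth].
Tactic Notation "simpl_env" "in" hyp(H) := cbn [map nth] in H.

Lemma den_tproj i a : den (tproj i) a = nth 0 a i. Proof. by []. Qed.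
Lemma den_tzero a : den tzero a = 0. Proof. by []. Qed.
Lemma den_tcomp F Gs a : den (tcomp F Gs) a = den F (map (fun G => den G a) Gs).
Proof. by []. Qed.
Lemma den_trec F G N Rs a : den (trec F G N Rs) a =
  precF (den F) (den G) (den N a) (map (fun R => den R a) Rs).
Proof. by []. Qed.
Lemma den_tmu B H Rs a : den (@tmu B H Rs) a = muF H (map (fun R => den R a) Rs).
Proof. by []. Qed.
Arguments tcomp : simpl never. Arguments trec : simpl never. Arguments tmu : simpl never.

(* Each derived program is locked
   behind its own key, so that matching the specification lemma of one
   program never unfolds another program into its (large) body. *)
Fact tS_key : unit. Proof. by []. Qed.
Definition tS (G : tprf) :=
  locked_with tS_key (tcomp tsucc [:: G]).
Lemma den_tS G a : den (tS G) a = (den G a).+1. Proof. by rewrite /tS locked_withE. Qed.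

Fixpoint tconst k := match k with 0 => tzero | k.+1 => tS (tconst k) end.
Lemma den_tconst k a : den (tconst k) a = k.
Proof. by elim: k => // k IH; rewrite -[tconst k.+1]/(tS (tconst k)) den_tS IH. Qed.

Fact tadd_key : unit. Proof. by []. Qed.
Definition tadd x y :=
  locked_with tadd_key (trec (tproj 0) (tS (tproj 1)) y [:: x]).
Lemma den_tadd x y a : den (tadd x y) a = den x a + den y a.
Proof.
rewrite /tadd locked_withE den_trec; simpl_env.
by elim: (den y a) => [|n IH]; cbn [precF]; rewrite ?addn0 // den_tS den_tproj IH addnS.
Qed.

Fact tpred_key : unit. Proof. by []. Qed.
Definition tpred x :=
  locked_with tpred_key (trec tzero (tproj 0) x [::]).
Lemma den_tpred x a : den (tpred x) a = (den x a).-1.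
Proof. by rewrite /tpred locked_withE den_trec; case: (den x a). Qed.

Fact tsub_key : unit. Proof. by []. Qed.
Definition tsub x y :=
  locked_with tsub_key (trec (tproj 0) (tpred (tproj 1)) y [:: x]).
Lemma den_tsub x y a : den (tsub x y) a = den x a - den y a.
Proof.
rewrite /tsub locked_withE den_trec; simpl_env.
by elim: (den y a) => [|n IH]; cbn [precF]; rewrite ?subn0 // den_tpred den_tproj IH subnS.
Qed.

Fact tmul_key : unit. Proof. by []. Qed.
Definition tmul x y :=
  locked_with tmul_key (trec tzero (tadd (tproj 1) (tproj 2)) y [:: x]).
Lemma den_tmul x y a : den (tmul x y) a = den x a * den y a.
Proof.
rewrite /tmul locked_withE den_trec; simpl_env.
by elim: (den y a) => [|n IH]; cbn [precF]; rewrite ?muln0 // den_tadd !den_tproj IH mulnS addnC.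
Qed.

(* Programs used as tests: the value 0 means "true". *)
Definition isz (n : nat) : bool := n == 0.
Arguments isz : simpl never.

Fact teq_key : unit. Proof. by []. Qed.
Definition teq x y :=
  locked_with teq_key (tadd (tsub x y) (tsub y x)).
Lemma isz_teq x y a : isz (den (teq x y) a) = (den x a == den y a).
Proof. by rewrite /teq locked_withE /isz den_tadd !den_tsub addn_eq0 !subn_eq0 eqn_leq. Qed.

Fact tle_key : unit. Proof. by []. Qed.
Definition tle x y :=
  locked_with tle_key (tsub x y).
Lemma isz_tle x y a : isz (den (tle x y) a) = (den x a <= den y a).
Proof. by rewrite /tle locked_withE /isz den_tsub subn_eq0. Qed.

Fact tlt_key : unit. Proof. by []. Qed.
Definition tlt x y :=
  locked_with tlt_key (tsub (tS x) y).
Lemma isz_tlt x y a : isz (den (tlt x y) a) = (den x a < den y a).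
Proof. by rewrite /tlt locked_withE /isz den_tsub den_tS subn_eq0. Qed.

Fact tnot_key : unit. Proof. by []. Qed.
Definition tnot t :=
  locked_with tnot_key (tsub (tconst 1) t).
Lemma den_tnot t a : den (tnot t) a = isz (den t a).
Proof. by rewrite /tnot locked_withE den_tsub den_tconst /isz; case: (den t a). Qed.
Lemma isz_tnot t a : isz (den (tnot t) a) = ~~ isz (den t a).
Proof. by rewrite den_tnot /isz; case: (den t a == 0). Qed.

Lemma isz_tadd x y a : isz (den (tadd x y) a) = isz (den x a) && isz (den y a).
Proof. by rewrite /isz den_tadd addn_eq0. Qed.

Lemma isz_tconst k a : isz (den (tconst k) a) = (k == 0).
Proof. by rewrite /isz den_tconst. Qed.

Fact tif_key : unit. Proof. by []. Qed.
Definition tif t x y :=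
  locked_with tif_key (tadd (tmul (tnot t) x) (tmul (tnot (tnot t)) y)).
Lemma den_tif t x y a : den (tif t x y) a = if isz (den t a) then den x a else den y a.
Proof.
rewrite /tif locked_withE den_tadd !den_tmul !den_tnot /isz.
by case: (den t a == 0); rewrite /= ?mul1n ?mul0n ?addn0.
Qed.
Lemma isz_tif t x y a :
  isz (den (tif t x y) a) = if isz (den t a) then isz (den x a) else isz (den y a).
Proof. by rewrite den_tif; case: ifP. Qed.

Fact tmod_key : unit. Proof. by []. Qed.
Definition tmod x p :=
  locked_with tmod_key
    (trec tzero (tif (teq (tS (tproj 1)) (tproj 2)) tzero (tS (tproj 1))) x [:: p]).
Lemma modnS_cases x p : 0 < p -> x.+1 %% p = if (x %% p).+1 == p then 0 else (x %% p).+1.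
Proof.
move=> Hp; rewrite {1}(divn_eq x p) -addnS modnMDl.
case: eqP => [->|Hne]; first exact: modnn.
by apply: modn_small; move: (ltn_pmod x Hp); rewrite leq_eqVlt => /orP [/eqP|].
Qed.
Lemma den_tmod x p a : 0 < den p a -> den (tmod x p) a = den x a %% den p a.
Proof.
move=> Hp; rewrite /tmod locked_withE den_trec; simpl_env.
elim: (den x a) => [|n IH]; cbn [precF]; first by rewrite mod0n.
by rewrite den_tif isz_teq den_tS !den_tproj; simpl_env; rewrite IH -modnS_cases.
Qed.

Fixpoint sumF (f : nat -> nat) n := match n with 0 => 0 | k.+1 => sumF f k + f k end.
Lemma sumF_eq0P f n : sumF f n = 0 <-> forall i, i < n -> f i = 0.
Proof.
elim: n => [|n IH] /=; first by split => // _ i.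
split => [/eqP|H].
  rewrite addn_eq0 => /andP [/eqP /IH H1 /eqP H2] i.
  by rewrite ltnS leq_eqVlt => /orP [/eqP ->|/H1].
by rewrite (proj2 IH) ?H // => i Hi; apply/H/ltnW.
Qed.

Lemma map_tproj_drop (pre rest : seq nat) :
  map (fun R => den R (pre ++ rest))
      [seq tproj (j + size pre) | j <- iota 0 (size rest)] = rest.
Proof.
rewrite -map_comp -[RHS](mkseq_nth 0) /mkseq; apply: eq_map => j /=.
by rewrite nth_cat ltnNge leq_addl /= addnK.
Qed.

Fact tbsum_key : unit. Proof. by []. Qed.
Definition tbsum (B N : tprf) (Rs : seq tprf) :=
  locked_with tbsum_key
    (trec tzero (tadd (tproj 1) (tcomp B (tproj 0 :: [seq tproj (j + 2) | j <- iota 0 (size Rs)])))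
          N Rs).
Lemma den_tbsum B N Rs a : den (tbsum B N Rs) a =
  sumF (fun i => den B (i :: map (fun R => den R a) Rs)) (den N a).
Proof.
rewrite /tbsum locked_withE den_trec; elim: (den N a) => // n IH; cbn [precF].
rewrite den_tadd den_tcomp; simpl_env; rewrite !den_tproj; simpl_env.
by rewrite IH -(size_map (fun R => den R a)) (map_tproj_drop [:: n; _]).
Qed.
Lemma isz_tbsumP B N Rs a : isz (den (tbsum B N Rs) a) <->
  forall i, i < den N a -> isz (den B (i :: map (fun R => den R a) Rs)).
Proof.
rewrite den_tbsum /isz; split => [/eqP /sumF_eq0P H i Hi|H]; first by apply/eqP/H.
by apply/eqP/sumF_eq0P => i Hi; apply/eqP/H.
Qed.


Fixpoint Tn n := match n with 0 => 0 | k.+1 => Tn k + k.+1 end.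

Lemma Tn_double s : s * s.+1 = Tn s * 2.
Proof. by elim: s => //= s IH; rewrite mulnDl -IH; lia. Qed.
Lemma cpairE a b : cpair a b = Tn (a + b) + b.
Proof. by rewrite /cpair Tn_double mulnK. Qed.
Lemma Tn_mono m n : m <= n -> Tn m <= Tn n.
Proof.
elim: n => [|n IH]; first by rewrite leqn0 => /eqP ->.
by rewrite leq_eqVlt => /orP [/eqP ->//|/IH] /=; lia.
Qed.
Lemma Tn_ge n : n <= Tn n.
Proof. by elim: n => //= n IH; lia. Qed.

Fact tT_key : unit. Proof. by []. Qed.
Definition tT x :=
  locked_with tT_key (trec tzero (tadd (tproj 1) (tS (tproj 0))) x [::]).
Lemma den_tT x a : den (tT x) a = Tn (den x a).
Proof.
rewrite /tT locked_withE den_trec; elim: (den x a) => // n IH; cbn [precF Tn].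
by rewrite den_tadd den_tS !den_tproj; simpl_env; rewrite IH.
Qed.

Definition diag_test := tlt (tproj 1) (tT (tS (tproj 0))).
Lemma diag_test_total : mu_total diag_test.
Proof.
move=> rs; exists (nth 0 rs 0).
by rewrite -/(isz _) isz_tlt den_tT den_tS !den_tproj; exact: Tn_ge.
Qed.
Definition Dz z := muF diag_test_total [:: z].

Lemma isz_diag_test s z : isz (den diag_test [:: s; z]) = (z < Tn s.+1).
Proof. by rewrite isz_tlt den_tT den_tS !den_tproj. Qed.

Lemma Dz_spec z : Tn (Dz z) <= z < Tn (Dz z).+1.
Proof.
have [/eqP H1 H2] := muF_spec diag_test_total [:: z]; rewrite -/(Dz z) in H1 H2.
rewrite -/(isz _) isz_diag_test in H1; rewrite H1 andbT.
case E: (Dz z) => [|k] //; have /eqP := H2 k ltac:(by rewrite E).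
by rewrite -/(isz _) isz_diag_test -leqNgt.
Qed.

Lemma Dz_eq z s : Tn s <= z < Tn s.+1 -> Dz z = s.
Proof.
move=> /andP [H1 H2]; apply: muF_eq; first by apply/eqP; rewrite -/(isz _) isz_diag_test.
move=> j Hj; apply/eqP; rewrite -/(isz _) isz_diag_test -leqNgt.
by apply: leq_trans H1; exact: Tn_mono.
Qed.

Definition sndc z := z - Tn (Dz z).
Definition fstc z := Dz z - sndc z.

Lemma Dz_cpair a b : Dz (cpair a b) = a + b.
Proof. by apply: Dz_eq; rewrite cpairE /=; apply/andP; split; lia. Qed.
Lemma sndc_cpair a b : sndc (cpair a b) = b.
Proof. by rewrite /sndc Dz_cpair cpairE; lia. Qed.
Lemma fstc_cpair a b : fstc (cpair a b) = a.
Proof. by rewrite /fstc sndc_cpair Dz_cpair; lia. Qed.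
Lemma cpair_surj z : cpair (fstc z) (sndc z) = z.
Proof.
have /andP [H1 H2] := Dz_spec z; rewrite /= in H2.
rewrite cpairE /fstc /sndc.
have -> : Dz z - (z - Tn (Dz z)) + (z - Tn (Dz z)) = Dz z by lia.
lia.
Qed.
Lemma cpair_inj a b a' b' : cpair a b = cpair a' b' -> a = a' /\ b = b'.
Proof. by move=> H; have := congr1 fstc H; have := congr1 sndc H; rewrite !fstc_cpair !sndc_cpair. Qed.
Lemma sndc_le z : sndc z <= z. Proof. exact: leq_subr. Qed.
Lemma fstc0 : fstc 0 = 0. Proof. exact: fstc_cpair 0 0. Qed.
Lemma sndc0 : sndc 0 = 0. Proof. exact: sndc_cpair 0 0. Qed.

Definition tD x := tmu diag_test_total [:: x].
Fact tsnd_key : unit. Proof. by []. Qed.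
Definition tsnd x :=
  locked_with tsnd_key (tsub x (tT (tD x))).
Fact tfst_key : unit. Proof. by []. Qed.
Definition tfst x :=
  locked_with tfst_key (tsub (tD x) (tsnd x)).
Fact tcpair_key : unit. Proof. by []. Qed.
Definition tcpair x y :=
  locked_with tcpair_key (tadd (tT (tadd x y)) y).
Lemma den_tsnd x a : den (tsnd x) a = sndc (den x a).
Proof. by rewrite /tsnd locked_withE den_tsub den_tT. Qed.
Lemma den_tfst x a : den (tfst x) a = fstc (den x a).
Proof. by rewrite /tfst locked_withE den_tsub den_tsnd. Qed.
Lemma den_tcpair x y a : den (tcpair x y) a = cpair (den x a) (den y a).
Proof. by rewrite /tcpair locked_withE den_tadd den_tT den_tadd cpairE. Qed.

Definition headc c := fstc c.-1.
Definition tailc c := sndc c.-1.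
Definition nthc i c := headc (iter i tailc c).

Lemma headc_code s : headc (code_seq s) = nth 0 s 0.
Proof. by case: s => [|x s]; rewrite /headc /= ?fstc0 ?fstc_cpair. Qed.
Lemma tailc_code s : tailc (code_seq s) = code_seq (behead s).
Proof. by case: s => [|x s]; rewrite /tailc /= ?sndc0 ?sndc_cpair. Qed.
Lemma iter_tailc_code i s : iter i tailc (code_seq s) = code_seq (drop i s).
Proof.
elim: i s => [|i IH] s; first by rewrite drop0.
by rewrite iterSr tailc_code IH; case: s => //=; rewrite drop_nil.
Qed.
Lemma nthc_code i s : nthc i (code_seq s) = nth 0 s i.
Proof. by rewrite /nthc iter_tailc_code headc_code nth_drop addn0. Qed.
Lemma map_nthc_code s : [seq nthc i (code_seq s) | i <- iota 0 (size s)] = s.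
Proof. by rewrite -[RHS](mkseq_nth 0 s) /mkseq; apply: eq_map => i; exact: nthc_code. Qed.

Lemma code_seq_surj c : exists s, code_seq s = c.
Proof.
elim: c {-2}c (leqnn c) => [|n IH] c Hc; first by exists [::]; move: Hc; rewrite leqn0 => /eqP ->.
case: c Hc => [|c] Hc; first by exists [::].
have [s Hs] := IH (sndc c) (leq_trans (sndc_le c) Hc).
by exists (fstc c :: s) => /=; rewrite Hs cpair_surj.
Qed.

Fact tcons_key : unit. Proof. by []. Qed.
Definition tcons x c :=
  locked_with tcons_key (tS (tcpair x c)).
Fact theadc_key : unit. Proof. by []. Qed.
Definition theadc c :=
  locked_with theadc_key (tfst (tpred c)).
Fact ttail_key : unit. Proof. by []. Qed.
Definition ttail c :=
  locked_with ttail_key (tsnd (tpred c)).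
Fact ttailn_key : unit. Proof. by []. Qed.
Definition ttailn i c :=
  locked_with ttailn_key (trec (tproj 0) (ttail (tproj 1)) i [:: c]).
Fact tnthc_key : unit. Proof. by []. Qed.
Definition tnthc i c :=
  locked_with tnthc_key (theadc (ttailn i c)).

Lemma den_tcons x c a : den (tcons x c) a = (cpair (den x a) (den c a)).+1.
Proof. by rewrite /tcons locked_withE den_tS den_tcpair. Qed.
Lemma den_theadc c a : den (theadc c) a = headc (den c a).
Proof. by rewrite /theadc locked_withE den_tfst den_tpred. Qed.
Lemma den_ttail c a : den (ttail c) a = tailc (den c a).
Proof. by rewrite /ttail locked_withE den_tsnd den_tpred. Qed.
Lemma den_ttailn i c a : den (ttailn i c) a = iter (den i a) tailc (den c a).
Proof.
rewrite /ttailn locked_withE den_trec; simpl_env; elim: (den i a) => // n IH; cbn [precF].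
by rewrite den_ttail den_tproj; simpl_env; rewrite IH.
Qed.
Lemma den_tnthc i c a : den (tnthc i c) a = nthc (den i a) (den c a).
Proof. by rewrite /tnthc locked_withE den_theadc den_ttailn. Qed.

Definition size_test := ttailn (tproj 0) (tproj 1).
Lemma size_test_total : mu_total size_test.
Proof.
move=> rs; have [s Hs] := code_seq_surj (nth 0 rs 0); exists (size s).
by rewrite den_ttailn !den_tproj; simpl_env; rewrite -Hs iter_tailc_code drop_size.
Qed.
Definition sizec c := muF size_test_total [:: c].
Fact tsizec_key : unit. Proof. by []. Qed.
Definition tsizec c :=
  locked_with tsizec_key (tmu size_test_total [:: c]).
Lemma den_tsizec c a : den (tsizec c) a = sizec (den c a).
Proof. by rewrite /tsizec locked_withE. Qed.

Lemma sizec_code s : sizec (code_seq s) = size s.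
Proof.
apply: muF_eq; first by rewrite den_ttailn !den_tproj; simpl_env; rewrite iter_tailc_code drop_size.
move=> j Hj; rewrite den_ttailn !den_tproj; simpl_env; rewrite iter_tailc_code.
case E: (drop j s) => //; move: (congr1 size E); rewrite size_drop /= => /eqP.
by rewrite subn_eq0 leqNgt Hj.
Qed.

(* Kleene normal form.  [chk e] is a total program such that
   [den (chk e) [:: c; code_seq args; v] = 0] iff [c] codes a certificate
   for the computation of [e] on [args] with result [v]:
   - for [PComp f gs], [c = cpair (code ws) (cpair cf (code cs))] with [ws]
     the values of the [gs], [cs] their certificates, [cf] that of [f];
   - for [PPrec f g], [c = cpair (code us) (cpair cf (code cs))] with [us]
     the successive stages of the recursion and [cs] the certificates of
     the steps;
   - for [PMin f], [c = cpair cf (cpair (code ws) (code cs))] with [ws]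
     the (predecessors of the positive) values of [f] below the result. *)

Fixpoint check_args (ch : prf -> tprf) (gs : seq prf) (j : nat) (Cg W A : tprf) : tprf :=
  match gs with
  | nil => tzero
  | g :: gs' => tadd (tcomp (ch g) [:: tnthc (tconst j) Cg; A; tnthc (tconst j) W])
                     (check_args ch gs' j.+1 Cg W A)
  end.

Fixpoint recode_list (W : tprf) (j k : nat) : tprf :=
  match k with 0 => tzero | k'.+1 => tcons (tnthc (tconst j) W) (recode_list W j.+1 k') end.

(* Stage [i] of a recursion; environment [i :: c :: args :: v]. *)
Definition precBody (chg : tprf) :=
  tcomp chg [:: tnthc (tproj 0) (tsnd (tsnd (tproj 1)));
                tcons (tproj 0) (tcons (tnthc (tproj 0) (tfst (tproj 1))) (ttail (tproj 2)));
                tnthc (tS (tproj 0)) (tfst (tproj 1))].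

(* A failed search step [m]; environment [m :: c :: args :: v]. *)
Definition minBody (chf : tprf) :=
  tcomp chf [:: tnthc (tproj 0) (tsnd (tsnd (tproj 1)));
                tcons (tproj 0) (tproj 2);
                tS (tnthc (tproj 0) (tfst (tsnd (tproj 1))))].

Fixpoint chk (e : prf) : tprf :=
  match e with
  | PZero => tproj 2
  | PSucc => teq (tproj 2) (tS (theadc (tproj 1)))
  | PProj i => teq (tproj 2) (tnthc (tconst i) (tproj 1))
  | PComp f gs =>
      tadd (tcomp (chk f) [:: tfst (tsnd (tproj 0)); recode_list (tfst (tproj 0)) 0 (size gs); tproj 2])
           (check_args chk gs 0 (tsnd (tsnd (tproj 0))) (tfst (tproj 0)) (tproj 1))
  | PPrec f g =>
      tadd (tnot (tproj 1))
      (tadd (tcomp (chk f) [:: tfst (tsnd (tproj 0)); ttail (tproj 1); tnthc (tconst 0) (tfst (tproj 0))])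
      (tadd (teq (tproj 2) (tnthc (theadc (tproj 1)) (tfst (tproj 0))))
            (tbsum (precBody (chk g)) (theadc (tproj 1)) [:: tproj 0; tproj 1; tproj 2])))
  | PMin f =>
      tadd (tcomp (chk f) [:: tfst (tproj 0); tcons (tproj 2) (tproj 1); tzero])
           (tbsum (minBody (chk f)) (tproj 2) [:: tproj 0; tproj 1; tproj 2])
  end.

Lemma den_recode_list W j k env :
  den (recode_list W j k) env = code_seq [seq nthc i (den W env) | i <- iota j k].
Proof.
elim: k j => [|k IH] j //; cbn [recode_list iota map code_seq].
by rewrite den_tcons den_tnthc den_tconst IH.
Qed.

Lemma den_check_args ch gs m Cg W A env : den (check_args ch gs m Cg W A) env = 0 <->
  forall j, j < size gs -> den (ch (nth PZero gs j))
     [:: nthc (m + j) (den Cg env); den A env; nthc (m + j) (den W env)] = 0.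
Proof.
elim: gs m => [|g gs IH] m; first by split => // _ j.
cbn [check_args size]; rewrite den_tadd den_tcomp; simpl_env; rewrite !den_tnthc !den_tconst.
split.
  move/eqP; rewrite addn_eq0 => /andP [/eqP H1 /eqP /IH H2] [|j] Hj; first by rewrite addn0.
  by rewrite addnS -addSn; apply: H2.
move=> H; apply/eqP; rewrite addn_eq0; apply/andP; split; apply/eqP.
  by have := H 0 isT; rewrite addn0.
by apply/IH => j Hj; rewrite addSn -addnS; exact: H j.+1 Hj.
Qed.

Lemma Forall_nth (P : prf -> Prop) gs j :
  List.Forall P gs -> j < size gs -> P (nth PZero gs j).
Proof. by move=> H; elim: H j => // g gs' Hg _ IH [|j] //= Hj; exact: IH. Qed.

Lemma Forall2_nth (R : prf -> nat -> Prop) gs ws : List.Forall2 R gs ws ->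
  size ws = size gs /\ forall j, j < size gs -> R (nth PZero gs j) (nth 0 ws j).
Proof.
elim=> [|g w gs' ws' Hgw _ [IH1 IH2]] /=; first by split => // j.
split; first by rewrite IH1.
by case=> // j /IH2.
Qed.

Lemma nth_Forall2 (R : prf -> nat -> Prop) gs ws : size ws = size gs ->
  (forall j, j < size gs -> R (nth PZero gs j) (nth 0 ws j)) -> List.Forall2 R gs ws.
Proof.
elim: gs ws => [|g gs IH] [|w ws] //= Hs H; constructor; first exact: (H 0).
by apply: IH; [case: Hs | move=> j Hj; exact: (H j.+1)].
Qed.

Lemma choice_seq (P : nat -> nat -> Prop) k : (forall j, j < k -> exists x, P j x) ->
  exists xs, size xs = k /\ forall j, j < k -> P j (nth 0 xs j).
Proof.
elim: k => [|k IH] H; first by exists [::].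
have [xs [Hs Hx]] := IH (fun j Hj => H j (ltnW Hj)).
have [x Hxk] := H k (ltnSn k).
exists (rcons xs x); split; first by rewrite size_rcons Hs.
move=> j; rewrite ltnS leq_eqVlt => /orP [/eqP ->|Hj]; first by rewrite nth_rcons Hs ltnn eqxx.
by rewrite nth_rcons Hs Hj; apply: Hx.
Qed.

Definition soundP e :=
  forall c args v, den (chk e) [:: c; code_seq args; v] = 0 -> peval e args v.
Definition complP e :=
  forall args v, peval e args v -> exists c, den (chk e) [:: c; code_seq args; v] = 0.

Lemma addn_eq0P a b : a + b = 0 <-> a = 0 /\ b = 0.
Proof. by split => [/eqP|[-> ->]]; rewrite // addn_eq0 => /andP [/eqP -> /eqP ->]. Qed.

Lemma teq_eq0P x y a : den (teq x y) a = 0 <-> den x a = den y a.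
Proof.
split => H; first by apply/eqP; rewrite -isz_teq /isz H.
by apply/eqP; rewrite -/(isz _) isz_teq H.
Qed.

Lemma den_env0 c a v : den (tproj 0) [:: c; a; v] = c. Proof. by []. Qed.
Lemma den_env1 c a v : den (tproj 1) [:: c; a; v] = a. Proof. by []. Qed.
Lemma den_env2 c a v : den (tproj 2) [:: c; a; v] = v. Proof. by []. Qed.

Lemma chk_sound_comp f gs : soundP f -> List.Forall soundP gs -> soundP (PComp f gs).
Proof.
move=> Hf Hgs c args v; cbn [chk]; rewrite den_tadd => /addn_eq0P [H1 /den_check_args H2].
rewrite den_tcomp in H1; simpl_env in H1.
rewrite den_tfst den_tsnd den_env0 den_recode_list den_tfst den_env0 den_env2 in H1.
apply: (ev_comp (ws := [seq nthc i (fstc c) | i <- iota 0 (size gs)])); last exact: Hf H1.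
apply: nth_Forall2; first by rewrite size_map size_iota.
move=> j Hj.
rewrite (nth_map 0) ?size_iota // nth_iota // add0n.
have := H2 j Hj; rewrite !den_tsnd !den_tfst den_env0 den_env1 add0n.
exact: (Forall_nth Hgs Hj).
Qed.

Lemma chk_sound_prec f g : soundP f -> soundP g -> soundP (PPrec f g).
Proof.
move=> Hf Hg c args v; cbn [chk].
rewrite den_tadd => /addn_eq0P [H0]; rewrite den_tadd => /addn_eq0P [H1].
rewrite den_tadd => /addn_eq0P [/teq_eq0P H2 H3].
case: args H0 H1 H2 H3 => [|n rest] H0 H1 H2 H3; first by move: H0; rewrite den_tnot.
rewrite den_tcomp in H1; simpl_env in H1.
rewrite den_tfst den_tsnd den_env0 den_ttail den_env1 den_tnthc den_tconst den_tfst den_env0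
  tailc_code in H1.
rewrite den_env2 den_tnthc den_theadc den_env1 headc_code den_tfst den_env0 in H2.
rewrite den_tbsum den_theadc den_env1 headc_code in H3; move/sumF_eq0P: H3 => H3.
rewrite H2 /=.
suff: forall i, i <= n -> peval (PPrec f g) (i :: rest) (nthc i (fstc c)) by apply.
elim=> [|i IH] Hi; first by constructor; exact: Hf H1.
apply: ev_precS (IH (ltnW Hi)) _.
have := H3 i Hi; rewrite /precBody den_tcomp; simpl_env.
rewrite !den_tnthc !den_tproj; simpl_env.
rewrite !den_tsnd !den_tcons !den_tnthc den_tS !den_tproj; simpl_env.
rewrite !den_tfst den_ttail !den_tproj; simpl_env; rewrite tailc_code.
exact: (Hg _ [:: i, nthc i (fstc c) & rest]).
Qed.

Lemma chk_sound_min f : soundP f -> soundP (PMin f).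
Proof.
move=> Hf c args v; cbn [chk]; rewrite den_tadd => /addn_eq0P [H1 H2].
rewrite den_tcomp in H1; simpl_env in H1.
rewrite den_tfst den_env0 den_tcons den_env2 den_env1 den_tzero in H1.
rewrite den_tbsum den_env2 in H2; move/sumF_eq0P: H2 => H2.
constructor; first exact: (Hf _ (v :: args) _ H1).
move=> m Hm; exists (nthc m (fstc (sndc c))).
have := H2 m Hm; rewrite /minBody den_tcomp; simpl_env.
rewrite !den_tnthc !den_tproj; simpl_env.
rewrite !den_tsnd !den_tcons den_tS !den_tnthc !den_tproj; simpl_env.
rewrite !den_tfst !den_tsnd !den_tproj; simpl_env.
exact: (Hf _ (m :: args)).
Qed.

Lemma chk_sound e : soundP e.
Proof.
elim/prf_nested_ind: e.
- by move=> c args v; cbn [chk]; rewrite den_env2 => ->; constructor.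
- move=> c args v; cbn [chk] => /teq_eq0P.
  by rewrite den_env2 den_tS den_theadc den_env1 headc_code => ->; constructor.
- move=> i c args v; cbn [chk] => /teq_eq0P.
  by rewrite den_env2 den_tnthc den_tconst den_env1 nthc_code => ->; constructor.
- exact: chk_sound_comp.
- exact: chk_sound_prec.
- exact: chk_sound_min.
Qed.

Lemma prec_trace f g n rest v : peval (PPrec f g) (n :: rest) v ->
  exists us, size us = n.+1 /\ nth 0 us n = v /\ peval f rest (nth 0 us 0) /\
     forall i, i < n -> peval g (i :: nth 0 us i :: rest) (nth 0 us i.+1).
Proof.
elim: n v => [|n IH] v H; first by inversion H; subst; exists [:: v].
inversion H as [| | | |? ? ? ? Ha|? ? ? ? u ? Hu Hgu|]; subst.
have [us [Hs [Hn [H0 Hi]]]] := IH _ Hu.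
exists (rcons us v); split; first by rewrite size_rcons Hs.
split; first by rewrite nth_rcons Hs ltnn eqxx.
split; first by rewrite nth_rcons Hs.
move=> i; rewrite ltnS leq_eqVlt => /orP [/eqP ->|Hlt].
  by rewrite !nth_rcons Hs ltnSn ltnn eqxx Hn.
have h1 : i < n.+1 by apply: ltnW; rewrite ltnS.
have h2 : i.+1 < n.+1 by rewrite ltnS.
by rewrite !nth_rcons Hs h1 h2; exact: Hi.
Qed.

Lemma chk_complete_comp f gs : complP f -> List.Forall complP gs -> complP (PComp f gs).
Proof.
move=> Hf Hgs args v H; inversion H as [| | |? ? ? ws ? Hw Hfw| | |]; subst.
have [Hs Hj] := Forall2_nth Hw.
have [cf Hcf] := Hf _ _ Hfw.
have [cs [Hcs Hc]] := @choice_seq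
  (fun j x => den (chk (nth PZero gs j)) [:: x; code_seq args; nth 0 ws j] = 0)
  (size gs) (fun j Hj' => Forall_nth Hgs Hj' _ _ (Hj j Hj')).
exists (cpair (code_seq ws) (cpair cf (code_seq cs))); cbn [chk].
rewrite den_tadd; apply/addn_eq0P; split.
  rewrite den_tcomp; simpl_env.
  rewrite !den_tfst !den_tsnd den_env0 den_recode_list den_tfst den_env0 den_env2.
  by rewrite sndc_cpair !fstc_cpair -Hs map_nthc_code.
apply/den_check_args => j Hj'.
rewrite !den_tsnd !den_tfst den_env0 den_env1 !sndc_cpair !fstc_cpair add0n !nthc_code.
exact: Hc.
Qed.

Lemma chk_complete_prec f g : complP f -> complP g -> complP (PPrec f g).
Proof.
move=> Hf Hg [|n rest] v H; first by inversion H.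
have [us [Hs [Hn [H0 Hi]]]] := prec_trace H.
have [cf Hcf] := Hf _ _ H0.
have [cs [Hcs Hc]] := @choice_seq
  (fun i x => den (chk g) [:: x; code_seq (i :: nth 0 us i :: rest); nth 0 us i.+1] = 0)
  n (fun i Hi' => Hg _ _ (Hi i Hi')).
exists (cpair (code_seq us) (cpair cf (code_seq cs))); cbn [chk].
rewrite den_tadd; apply/addn_eq0P; split; first by rewrite den_tnot den_env1.
rewrite den_tadd; apply/addn_eq0P; split.
  rewrite den_tcomp; simpl_env; rewrite den_tfst den_tsnd den_env0 den_ttail den_env1.
  rewrite den_tnthc den_tconst den_tfst den_env0.
  by rewrite tailc_code fstc_cpair sndc_cpair fstc_cpair nthc_code.
rewrite den_tadd; apply/addn_eq0P; split.
  apply/teq_eq0P; rewrite den_env2 den_tnthc den_theadc den_env1 headc_code den_tfst den_env0.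
  by rewrite fstc_cpair nthc_code Hn.
rewrite den_tbsum den_theadc den_env1 headc_code; apply/sumF_eq0P => i Hi'.
rewrite /precBody den_tcomp; simpl_env; rewrite !den_tnthc !den_tproj; simpl_env.
rewrite !den_tsnd !den_tcons !den_tnthc den_tS !den_tproj; simpl_env.
rewrite !den_tfst den_ttail !den_tproj; simpl_env.
by rewrite tailc_code !sndc_cpair !fstc_cpair !nthc_code; exact: Hc.
Qed.

Lemma chk_complete_min f : complP f -> complP (PMin f).
Proof.
move=> Hf args v H; inversion H as [| | | | | |? ? ? Hz Hlt]; subst.
have [cf0 Hcf0] := Hf _ _ Hz.
have [ws [Hws Hw]] := @choice_seq (fun m w => peval f (m :: args) w.+1) v Hlt.
have [cs [Hcs Hc]] := @choice_seq
  (fun m x => den (chk f) [:: x; code_seq (m :: args); (nth 0 ws m).+1] = 0)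
  v (fun m Hm => Hf _ _ (Hw m Hm)).
exists (cpair cf0 (cpair (code_seq ws) (code_seq cs))); cbn [chk].
rewrite den_tadd; apply/addn_eq0P; split.
  rewrite den_tcomp; simpl_env.
  by rewrite den_tfst den_env0 den_tcons den_env2 den_env1 den_tzero fstc_cpair.
rewrite den_tbsum den_env2; apply/sumF_eq0P => m Hm.
rewrite /minBody den_tcomp; simpl_env; rewrite !den_tnthc !den_tproj; simpl_env.
rewrite !den_tsnd !den_tcons den_tS !den_tnthc !den_tproj; simpl_env.
rewrite !den_tfst !den_tsnd !den_tproj; simpl_env.
by rewrite !sndc_cpair !fstc_cpair !nthc_code; exact: Hc.
Qed.

Lemma chk_complete e : complP e.
Proof.
elim/prf_nested_ind: e.
- by move=> args v H; inversion H; subst; exists 0.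
- move=> args v H; inversion H; subst; exists 0; cbn [chk]; apply/teq_eq0P.
  by rewrite den_env2 den_tS den_theadc den_env1 headc_code.
- move=> i args v H; inversion H; subst; exists 0; cbn [chk]; apply/teq_eq0P.
  by rewrite den_env2 den_tnthc den_tconst den_env1 nthc_code.
- exact: chk_complete_comp.
- exact: chk_complete_prec.
- exact: chk_complete_min.
Qed.

Lemma chk_spec e args : (exists v, peval e args v) <->
  (exists c v, den (chk e) [:: c; code_seq args; v] = 0).
Proof.
split => [[v /chk_complete [c Hc]]|[c [v /chk_sound H]]]; [by exists c, v | by exists v].
Qed.

Lemma ce_ext (P Q : nat -> Prop) : ce P -> (forall n, P n <-> Q n) -> ce Q.
Proof. by move=> [e He] H; exists e => n; rewrite -H; exact: He. Qed.

(* A single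
   unbounded search over triples (s, certificate, value) decides it. *)
Definition searchBody (e : prf) (D Q : tprf) : tprf :=
  tadd (tcomp D [:: tfst (tproj 0); tproj 1])
       (tcomp (chk e) [:: tfst (tsnd (tproj 0));
                          tcons (tcomp Q [:: tfst (tproj 0); tproj 1]) tzero;
                          tsnd (tsnd (tproj 0))]).

Lemma den_searchBody e D Q t x : den (searchBody e D Q) [:: t; x] =
  den D [:: fstc t; x] +
  den (chk e) [:: fstc (sndc t); code_seq [:: den Q [:: fstc t; x]]; sndc (sndc t)].
Proof.
rewrite den_tadd !den_tcomp; simpl_env.
by rewrite !den_tfst !den_tsnd den_tcons den_tcomp den_tzero; simpl_env; rewrite !den_tfst.
Qed.

Lemma ce_search (e : prf) (D Q : tprf) :
  ce (fun x => exists s, den D [:: s; x] = 0 /\ exists v, peval e [:: den Q [:: s; x]] v).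
Proof.
exists (PMin (searchBody e D Q)) => x; rewrite pmin_halts; split.
  move=> [s [Hd /chk_spec [c [v Hc]]]]; exists (cpair s (cpair c v)).
  by rewrite den_searchBody !(fstc_cpair, sndc_cpair) Hd.
move=> [t]; rewrite den_searchBody => /addn_eq0P [Hd Hc]; exists (fstc t); split => //.
by apply/chk_spec; exists (fstc (sndc t)), (sndc (sndc t)).
Qed.

Definition primeBody := tif (tlt (tconst 1) (tproj 0)) (tnot (tmod (tproj 1) (tproj 0))) tzero.
Fact tprime_key : unit. Proof. by []. Qed.
Definition tprime M :=
  locked_with tprime_key (tadd (tlt (tconst 1) M) (tbsum primeBody M [:: M])).

Lemma isz_primeBody d m : d < m -> isz (den primeBody [:: d; m]) = (1 < d) ==> ~~ (d %| m).
Proof.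
move=> Hd; rewrite isz_tif isz_tlt den_tconst den_tproj; simpl_env.
case: ltnP => H1; last by [].
rewrite isz_tnot den_tmod !den_tproj; simpl_env; last exact: ltn_trans H1.
by rewrite /isz /dvdn.
Qed.

Lemma isz_tprime M a : isz (den (tprime M) a) = prime (den M a).
Proof.
rewrite /tprime locked_withE isz_tadd isz_tlt den_tconst.
apply/andP/idP => [[H1 /isz_tbsumP H2]|Hp].
  apply/primeP; split => // d Hd; case: (ltngtP d 1) => [Hd1|Hd1|->//].
    move: Hd1; rewrite ltnS leqn0 => /eqP Hd0; move: Hd H1; rewrite Hd0 dvd0n => /eqP ->.
    by [].
  have := dvdn_leq (ltnW H1) Hd; rewrite leq_eqVlt => /orP [/eqP ->|Hdm]; first by rewrite eqxx orbT.
  by move: (H2 d Hdm); simpl_env; rewrite isz_primeBody // Hd1 Hd.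
split; first exact: prime_gt1.
apply/isz_tbsumP => d Hd; simpl_env; rewrite isz_primeBody //; apply/implyP => Hd1.
apply/negP => /(primeP Hp).2 /orP [/eqP Hd1'|/eqP Hdm]; first by rewrite Hd1' in Hd1.
by rewrite Hdm ltnn in Hd.
Qed.

Definition nextprime_test := tprime (tadd (tS (tproj 1)) (tproj 0)).
Lemma nextprime_test_total : mu_total nextprime_test.
Proof.
move=> rs; have [p Hlt Hp] := prime_above (nth 0 rs 0).
exists (p - (nth 0 rs 0).+1).
by rewrite -/(isz _) isz_tprime den_tadd den_tS !den_tproj /= subnKC.
Qed.
Definition npF x := x.+1 + muF nextprime_test_total [:: x].
Fact tnp_key : unit. Proof. by []. Qed.
Definition tnp x :=
  locked_with tnp_key (tadd (tS x) (tmu nextprime_test_total [:: x])).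
Lemma den_tnp x a : den (tnp x) a = npF (den x a).
Proof. by rewrite /tnp locked_withE den_tadd den_tS den_tmu. Qed.

Lemma npF_spec x : x < npF x /\ prime (npF x).
Proof.
split; first exact: leq_addr.
have [/eqP H _] := muF_spec nextprime_test_total [:: x].
by move: H; rewrite -/(isz _) isz_tprime den_tadd den_tS !den_tproj.
Qed.

Fixpoint qF n := match n with 0 => 2 | k.+1 => npF (qF k) end.
Fact tq_key : unit. Proof. by []. Qed.
Definition tq n :=
  locked_with tq_key (trec (tconst 2) (tnp (tproj 1)) n [::]).
Lemma den_tq n a : den (tq n) a = qF (den n a).
Proof.
rewrite /tq locked_withE den_trec; elim: (den n a) => [|k IH]; cbn [precF qF]; first by rewrite den_tconst.
by rewrite den_tnp den_tproj; simpl_env; rewrite IH.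
Qed.

Lemma qF_prime n : prime (qF n).
Proof. by case: n => //= n; exact: (npF_spec _).2. Qed.

Lemma qF_inj : injective qF.
Proof.
have qF_lt m n : m < n -> qF m < qF n.
  elim: n => // n IH; rewrite ltnS leq_eqVlt => /orP [/eqP ->|/IH H]; first exact: (npF_spec _).1.
  exact: ltn_trans H (npF_spec _).1.
by move=> m n H; case: (ltngtP m n) => // /qF_lt; rewrite H ltnn.
Qed.

Lemma Forall_map_iff (P : nat -> Prop) (f : nat -> nat) (s : seq nat) :
  List.Forall P (map f s) <-> List.Forall (fun x => P (f x)) s.
Proof.
elim: s => [|x s IH] /=; first by split.
by split => H; inversion H; subst; constructor => //; exact/IH.
Qed.

Lemma Forall_in (T : Type) (P : T -> Prop) (f : nat -> T) s :
  List.Forall P (map f s) <-> forall k, k \in s -> P (f k).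
Proof.
elim: s => [|x s IH] /=; first by split.
split => [H k|H].
  inversion H; subst; rewrite in_cons => /orP [/eqP ->//|Hk]; exact: (proj1 IH H3).
constructor; first by apply: H; rewrite in_cons eqxx.
by apply/IH => k Hk; apply: H; rewrite in_cons Hk orbT.
Qed.

Lemma Forall_nthP (T : Type) (d : T) (P : T -> Prop) s :
  List.Forall P s <-> forall i, i < size s -> P (nth d s i).
Proof.
elim: s => [|x s IH] /=; first by split.
split => [H [|i] Hi|H]; first by inversion H.
  by inversion H; subst; exact: (proj1 IH H3).
by constructor; [exact: (H 0) | apply/IH => i Hi; exact: (H i.+1)].
Qed.

Lemma Forall_allP (P : pred nat) s : List.Forall (fun x => P x) s <-> all P s.
Proof.
rewrite (Forall_nthP 0); split => [H|/allP H i Hi]; last by apply/H/mem_nth.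
by apply/(all_nthP 0) => i /H.
Qed.

Lemma Forall_of_all (P : nat -> Prop) (q : pred nat) s :
  all q s -> (forall x, q x -> P x) -> List.Forall P s.
Proof. by move=> /Forall_allP H Hq; apply: List.Forall_impl H. Qed.

Lemma iso_refl L A : iso L A A.
Proof.
exists id; do 2![split => //]; split; first by move=> y Hy; exists y.
by move=> i args _ _ _; rewrite map_id.
Qed.

Lemma iso_sym L A B : iso L A B -> iso L B A.
Proof.
case=> f [H1 [H2 [H3 H4]]].
have Hex : forall y, exists x, dom B y -> dom A x /\ f x = y.
  move=> y; case: (classic (dom B y)) => [/H3 [x Hx]|Hy]; first by exists x.
  by exists 0.
pose g y := proj1_sig (constructive_indefinite_description _ (Hex y)).
have Hg : forall y, dom B y -> dom A (g y) /\ f (g y) = y.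
  by move=> y; exact: (proj2_sig (constructive_indefinite_description _ (Hex y))).
exists g; split; first by move=> y /Hg [].
split; first by move=> y y' Hy Hy' E; rewrite -(Hg _ Hy).2 -(Hg _ Hy').2 E.
split.
  move=> x Hx; exists (f x); split; first exact: H1.
  by have [Ha Hb] := Hg _ (H1 _ Hx); exact: H2.
move=> i args Hi Hs Hd.
have Hd' : List.Forall (dom A) (map g args).
  by apply/Forall_map_iff; apply: List.Forall_impl Hd => y /Hg [].
rewrite (H4 _ _ Hi _ Hd') ?size_map // -map_comp.
suff -> : map (f \o g) args = args by [].
by elim: Hd {Hs Hd'} => //= y s Hy _ ->; rewrite (Hg y Hy).2.
Qed.

Lemma iso_trans L A B C : iso L A B -> iso L B C -> iso L A C.
Proof.
case=> f [F1 [F2 [F3 F4]]] [g [G1 [G2 [G3 G4]]]].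
exists (g \o f); split; first by move=> x /F1 /G1.
split; first by move=> x y Hx Hy /= /G2 E; apply: F2 => //; apply: E; apply: F1.
split.
  move=> z /G3 [y [Hy <-]]; case: (F3 _ Hy) => x [Hx <-]; by exists x.
move=> i args Hi Hs Hd; rewrite map_comp.
have Hd' : List.Forall (dom B) (map f args).
  by apply/Forall_map_iff; apply: List.Forall_impl Hd.
by rewrite (F4 _ _ Hi Hs Hd) (G4 _ _ Hi _ Hd') // size_map.
Qed.

Lemma diag_iso L A B : (forall l, diag L A l <-> diag L B l) -> iso L A B.
Proof.
move=> H.
have Hdom : forall x, dom A x <-> dom B x.
  move=> x; split => Hx.
    have /H [_ [Hf _]] : diag L A (true, AEq x x) by do 2![split => //]; repeat constructor.
    by inversion Hf.
  have /H [_ [Hf _]] : diag L B (true, AEq x x) by do 2![split => //]; repeat constructor.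
  by inversion Hf.
exists id; split; first by move=> x /Hdom.
split => //; split; first by move=> y /Hdom Hy; exists y.
move=> i args Hi Hs Hd; rewrite map_id.
have Hd' : List.Forall (dom B) args by apply: List.Forall_impl Hd => x /Hdom.
split => Hr; first by have /H [_ [_ ]] : diag L A (true, ARel i args) by [].
apply: NNPP => Hr'.
have /H [_ [_ /= Hn]] : diag L A (false, ARel i args) by [].
exact: Hn Hr.
Qed.

(* A chain [z_0, ..., z_{q-1}] asserts [z_0 = 1], [z_{q-1} = 0] and
   [z_{k+1} = z_k + z_0]; in a field of prime order p its elements are
   [1, 2, ..., q mod p], so chains witness the characteristic. *)
Definition chain (zs : seq nat) : seq literal :=
  (true, ARel 3 [:: nth 0 zs 0]) :: (true, ARel 2 [:: last 0 zs]) ::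
  [seq (true, ARel 0 [:: nth 0 zs k; nth 0 zs 0; nth 0 zs k.+1]) | k <- iota 0 (size zs).-1].

Lemma ltn_predn n : 0 < n -> n.-1 < n. Proof. by case: n. Qed.

Lemma chain_length_dvd A p zs : prime p -> iso L_field A (Zp_struct p) ->
  List.Forall (diag L_field A) (chain zs) -> 0 < size zs -> p %| size zs.
Proof.
move=> Hp [f [F1 [F2 [F3 F4]]]] Hc Hsz.
inversion Hc as [|? ? H3 Hc']; subst; inversion Hc' as [|? ? H2 Hc'']; subst.
move/Forall_in: Hc'' => H0.
have relI i args : diag L_field A (true, ARel i args) -> Defs.rel (Zp_struct p) i (map f args).
  by move=> [[Hi Hs] [Hd Hr]]; apply/(F4 _ _ Hi Hs Hd).
have W0 : f (nth 0 zs 0) = 1 by have := relI _ _ H3.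
have Wl : f (last 0 zs) = 0 by have := relI _ _ H2.
have Wk k : k < (size zs).-1 -> f (nth 0 zs k.+1) = (f (nth 0 zs k) + f (nth 0 zs 0)) %% p.
  by move=> Hk; have := relI _ _ (H0 k _); rewrite mem_iota add0n => /(_ Hk) /= ->.
have Hw k : k < size zs -> f (nth 0 zs k) = k.+1 %% p.
  elim: k => [|k IH] Hk; first by rewrite W0 modn_small // prime_gt1.
  rewrite Wk; last by rewrite -ltnS prednK.
  by rewrite IH ?W0 ?modnDml ?addn1 //; exact: ltnW.
have := Hw _ (ltn_predn Hsz); rewrite nth_last Wl prednK //.
by move/esym/eqP.
Qed.

Lemma succ_mod_uniq p : 0 < p -> uniq [seq k.+1 %% p | k <- iota 0 p].
Proof.
move=> Hp0; have -> : [seq k.+1 %% p | k <- iota 0 p] = rcons (iota 1 p.-1) 0.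
  have Ep : p = p.-1 + 1 by rewrite addn1 prednK.
  rewrite [in iota 0 p]Ep iotaD map_cat /= add0n prednK // modnn cats1.
  congr rcons; rewrite -[in RHS](addn0 1) iotaDl; apply/eq_in_map => k.
  rewrite mem_iota add0n => Hk /=; rewrite add1n modn_small //.
  exact: leq_ltn_trans Hk (ltn_predn Hp0).
by rewrite rcons_uniq iota_uniq mem_iota.
Qed.

Lemma chain_exists A p : prime p -> iso L_field A (Zp_struct p) ->
  exists zs, size zs = p /\ uniq zs /\ List.Forall (diag L_field A) (chain zs).
Proof.
move=> Hp /iso_sym [g [G1 [G2 [G3 G4]]]].
have Hp1 := prime_gt1 Hp; have Hp0 : 0 < p by apply: ltnW.
pose zs := [seq g (k.+1 %% p) | k <- iota 0 p].
have Hsz : size zs = p by rewrite size_map size_iota.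
have Hn k : k < p -> nth 0 zs k = g (k.+1 %% p).
  by move=> Hk; rewrite (nth_map 0) ?size_iota // nth_iota.
have relI i args : i < 4 -> size args = nth 0 L_field i -> all (fun x => x < p) args ->
    Defs.rel (Zp_struct p) i args -> diag L_field A (true, ARel i (map g args)).
  move=> Hi Hs Ha Hr; split; first by split => //; rewrite size_map.
  split.
    by apply/Forall_map_iff; apply: (Forall_of_all (P := fun x => dom A (g x)) Ha) => x /G1.
  by apply/(G4 _ _ Hi Hs) => //; apply: (Forall_of_all (P := dom (Zp_struct p)) Ha).
exists zs; split => //; split.
  have -> : zs = map g [seq k.+1 %% p | k <- iota 0 p] by rewrite /zs -map_comp.
  rewrite map_inj_in_uniq; first exact: succ_mod_uniq.
  by move=> x y /mapP [k _ ->] /mapP [k' _ ->] /G2; apply; exact: ltn_pmod.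
apply/List.Forall_cons.
  by rewrite Hn //; apply: (relI 3 [:: 1 %% p]); rewrite //= ?ltn_pmod // modn_small.
apply/List.Forall_cons.
  rewrite -nth_last Hsz Hn ?ltn_predn // prednK // modnn.
  by apply: (relI 2 [:: 0]); rewrite //= Hp0.
apply/Forall_in => k; rewrite mem_iota add0n Hsz => Hk.
have Hk' : k < p by apply: leq_trans Hk (leq_pred p).
have Hk2 : k.+1 < p by apply: (leq_ltn_trans Hk); exact: ltn_predn.
rewrite !Hn //; apply: (relI 0 [:: k.+1 %% p; 1 %% p; k.+2 %% p]); rewrite //= ?ltn_pmod //.
by rewrite modnDm addn1.
Qed.

Lemma prime_dvd_eq p q : prime p -> prime q -> p %| q -> p = q.
Proof.
move=> Hp Hq; have H1 : p != 1 by rewrite neq_ltn prime_gt1 ?orbT.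
by move/(prime_nt_dvdP Hq H1).
Qed.

Lemma Zp_iso_eq p p' : prime p -> prime p' ->
  iso L_field (Zp_struct p) (Zp_struct p') -> p = p'.
Proof.
move=> Hp Hp' Hi; have [zs [Hs [_ Hc]]] := chain_exists Hp (iso_refl _ _).
have := chain_length_dvd Hp' Hi Hc; rewrite Hs => /(_ (prime_gt0 Hp)).
by move/(prime_dvd_eq Hp' Hp).
Qed.

(* A chain of distinct elements is realised in a finite structure: the copy
   of Z/q on the elements of the chain. *)
Definition chain_model (zs : seq nat) : structure :=
  Structure (fun x => x \in zs)
    (fun i args => Defs.rel (Zp_struct (size zs)) i
                     (map (fun x => (index x zs).+1 %% size zs) args)).

Lemma chain_model_ok zs : uniq zs -> 1 < size zs ->
  finite_structure (chain_model zs) /\ List.Forall (diag L_field (chain_model zs)) (chain zs).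
Proof.
move=> Hu Hq; set q := size zs; have Hq0 : 0 < q by apply: ltnW.
split; first by exists (\max_(x <- zs) x).+1 => x Hx; rewrite ltnS; exact: leq_bigmax_seq.
have Hidx k : k < q -> (index (nth 0 zs k) zs).+1 %% q = k.+1 %% q by move=> Hk; rewrite index_uniq.
have relF i args : i < 4 -> size args = nth 0 L_field i -> all (fun x => x \in zs) args ->
    Defs.rel (Zp_struct q) i (map (fun x => (index x zs).+1 %% q) args) ->
    diag L_field (chain_model zs) (true, ARel i args).
  by move=> Hi Hs Ha Hr; do 2![split => //]; apply: (Forall_of_all (P := dom (chain_model zs)) Ha).
apply/List.Forall_cons; first by apply: relF; rewrite //= ?mem_nth // Hidx // modn_small.
apply/List.Forall_cons.
  rewrite -nth_last; apply: relF; rewrite //= ?mem_nth ?ltn_predn //.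
  by rewrite Hidx ?ltn_predn // prednK // modnn.
apply/Forall_in => k; rewrite mem_iota add0n => Hk.
have Hk1 : k < q by apply: leq_trans Hk (leq_pred q).
have Hk2 : k.+1 < q by apply: (leq_ltn_trans Hk); exact: ltn_predn.
apply: relF; rewrite //= ?mem_nth // !Hidx //.
by rewrite modnDm addn1.
Qed.

(* A literal code is
   [cpair b (cpair k (cpair a c))] with polarity [b], kind [k] (0 for
   equality, 1 for relations), and [a], [c] the two sides of an equation or
   the relation symbol and its coded argument list. *)
Definition polB (b : nat) (h : bool) := if b == 1 then h else ~~ h.
Definition polT (B H : tprf) := tif (teq B (tconst 1)) H (tnot H).
Lemma isz_polT B H a : isz (den (polT B H) a) = polB (den B a) (isz (den H a)).
Proof. by rewrite isz_tif isz_teq den_tconst isz_tnot. Qed.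

Section LiteralTest.
Variables X P : tprf.
Let Lb := tfst X.
Let Lk := tfst (tsnd X).
Let La := tfst (tsnd (tsnd X)).
Let Lc := tsnd (tsnd (tsnd X)).
Let Lx j := tnthc (tconst j) Lc.
Definition eqPart := tadd (tlt La P) (tadd (tlt Lc P) (polT Lb (teq La Lc))).
Definition sizeOk := tif (tle La (tconst 1)) (teq (tsizec Lc) (tconst 3))
                       (tif (tle La (tconst 3)) (teq (tsizec Lc) (tconst 1)) (tconst 1)).
Definition constsOk :=
  tif (tle La (tconst 1)) (tadd (tlt (Lx 0) P) (tadd (tlt (Lx 1) P) (tlt (Lx 2) P)))
      (tlt (Lx 0) P).
Definition holdsT :=
  tif (teq La (tconst 0)) (teq (tmod (tadd (Lx 0) (Lx 1)) P) (Lx 2))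
  (tif (teq La (tconst 1)) (teq (tmod (tmul (Lx 0) (Lx 1)) P) (Lx 2))
  (tif (teq La (tconst 2)) (teq (Lx 0) (tconst 0)) (teq (Lx 0) (tconst 1)))).
Definition relPart := tadd sizeOk (tadd constsOk (polT Lb holdsT)).
Definition tlit := tadd (tle Lb (tconst 1))
   (tif (teq Lk (tconst 0)) eqPart (tif (teq Lk (tconst 1)) relPart (tconst 1))).
End LiteralTest.

Definition holdsB i (ac p : nat) :=
  if i == 0 then (nthc 0 ac + nthc 1 ac) %% p == nthc 2 ac
  else if i == 1 then (nthc 0 ac * nthc 1 ac) %% p == nthc 2 ac
  else if i == 2 then nthc 0 ac == 0 else nthc 0 ac == 1.
Definition litB (x p : nat) :=
  let b := fstc x in let k := fstc (sndc x) in
  let a := fstc (sndc (sndc x)) in let c := sndc (sndc (sndc x)) in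
  (b <= 1) &&
  (if k == 0 then [&& a < p, c < p & polB b (a == c)]
   else if k == 1 then
     [&& (if a <= 1 then sizec c == 3 else if a <= 3 then sizec c == 1 else false),
         (if a <= 1 then [&& nthc 0 c < p, nthc 1 c < p & nthc 2 c < p] else nthc 0 c < p) &
         polB b (holdsB a c p)]
   else false).

Lemma isz_tlit X P a : 0 < den P a -> isz (den (tlit X P) a) = litB (den X a) (den P a).
Proof.
move=> Hp; rewrite /tlit /eqPart /relPart /sizeOk /constsOk /holdsT.
rewrite ?(isz_polT, isz_tif, isz_teq, isz_tle, isz_tlt, isz_tnot, isz_tconst, isz_tadd).
by rewrite ?(den_tfst, den_tsnd, den_tconst, den_tnthc, den_tsizec, den_tmod, den_tmul, den_tadd).
Qed.

Lemma polB_bool (b : bool) h : polB (nat_of_bool b) h = if b then h else ~~ h.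
Proof. by case: b. Qed.

Lemma litB_diag l p : 0 < p -> litB (code_lit l) p <-> diag L_field (Zp_struct p) l.
Proof.
move=> Hp; case: l => b [x y | i args];
  rewrite /litB /code_lit /code_atom !(fstc_cpair, sndc_cpair) polB_bool;
  rewrite /diag /wf_lit /wf_atom /holds /consts /=.
- have -> : (nat_of_bool b <= 1) = true by case: b.
  rewrite /=; split.
    move=> /and3P [Hx Hy Hb]; split => //; split; first by apply/Forall_allP => /=; rewrite Hx Hy.
    by case: b Hb => /eqP.
  move=> [_ [/Forall_allP /= /and3P [Hx Hy _] Hb]]; rewrite Hx Hy /=.
  by case: b Hb => [->|/eqP]; rewrite ?eqxx.
- have -> : (nat_of_bool b <= 1) = true by case: b.
  rewrite /= sizec_code !nthc_code /holdsB !nthc_code.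
  case: i => [|[|[|[|i]]]] /=; last by split => //; case=> -[].
  all: case: args => [|a0 [|a1 [|a2 [|a3 args]]]] /=; try by split; [done | case=> -[]].
  all: rewrite polB_bool; split;
   [ case/andP => Hc Hh; split; [done|split; [apply/Forall_allP; rewrite /= ?andbT; exact Hc| ]];
     case: b Hh => /= [/eqP //| /eqP //]
   | case=> [_ [/Forall_allP Hc Hh]]; apply/andP; split; [rewrite /= ?andbT in Hc; exact Hc|];
     case: b Hh => /= [->|/eqP] // ].
Qed.

Definition tlits A P := tbsum (tlit (tnthc (tproj 0) (tproj 1)) (tproj 2)) (tsizec A) [:: A; P].

Lemma tlits_spec A P env alpha p :
  den A env = code_seq (map code_lit alpha) -> den P env = p -> 0 < p ->
  isz (den (tlits A P) env) <-> List.Forall (diag L_field (Zp_struct p)) alpha.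
Proof.
move=> HA HP Hp; rewrite isz_tbsumP den_tsizec HA sizec_code size_map.
rewrite (Forall_nthP (true, AEq 0 0)).
have Hi i : i < size alpha -> isz (den (tlit (tnthc (tproj 0) (tproj 1)) (tproj 2))
      (i :: map (fun R => den R env) [:: A; P])) = litB (code_lit (nth (true, AEq 0 0) alpha i)) p.
  move=> Hi; rewrite isz_tlit; last by rewrite den_tproj /= HP.
  simpl_env; rewrite den_tnthc !den_tproj; simpl_env.
  by rewrite HA HP nthc_code (nth_map (true, AEq 0 0)).
by split => H i Hi'; have := H i Hi'; rewrite Hi // => /(litB_diag _ Hp).
Qed.

(* [tbuild G N Rs] computes the code of the list [G 0, ..., G (N-1)]
   (with parameters [Rs]), built backwards by recursion. *)
Definition tbuild (G N : tprf) (Rs : seq tprf) :=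
  trec tzero (tcons (tcomp G (tsub (tsub (tproj 2) (tconst 1)) (tproj 0)
                              :: [seq tproj (j + 3) | j <- iota 0 (size Rs)]))
                    (tproj 1)) N (N :: Rs).

Lemma den_tbuild G N Rs a : den (tbuild G N Rs) a =
  code_seq [seq den G (k :: map (fun R => den R a) Rs) | k <- iota 0 (den N a)].
Proof.
rewrite den_trec; set rs := map (fun R => den R a) Rs; cbn [map]; set Nv := den N a.
suff H n : n <= Nv -> precF (den tzero)
   (den (tcons (tcomp G (tsub (tsub (tproj 2) (tconst 1)) (tproj 0)
                          :: [seq tproj (j + 3) | j <- iota 0 (size Rs)])) (tproj 1)))
   n (Nv :: rs) = code_seq [seq den G (k :: rs) | k <- iota (Nv - n) n].
  by rewrite H // subnn.
elim: n => [|n IH] Hn //; cbn [precF].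
rewrite den_tcons den_tcomp; simpl_env; rewrite !den_tsub den_tconst !den_tproj; simpl_env.
rewrite IH ?(ltnW Hn) // -(size_map (fun R => den R a)) -/rs (map_tproj_drop [:: n; _; Nv]).
by rewrite -subnDA add1n -[in iota (Nv - n) _](subnSK Hn).
Qed.

Definition litR (i : nat) (Ac : tprf) :=
  tcpair (tconst 1) (tcpair (tconst 1) (tcpair (tconst i) Ac)).
Lemma den_litR i Ac a args :
  den Ac a = code_seq args -> den (litR i Ac) a = code_lit (true, ARel i args).
Proof. by move=> H; rewrite !den_tcpair !den_tconst H. Qed.

Definition chainBody := (* environment: k :: code zs *)
  litR 0 (tcons (tnthc (tproj 0) (tproj 1)) (tcons (tnthc (tconst 0) (tproj 1))
          (tcons (tnthc (tS (tproj 0)) (tproj 1)) (tconst 0)))).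
Definition tchain (c : tprf) :=
  tcons (litR 3 (tcons (tnthc (tconst 0) c) (tconst 0)))
 (tcons (litR 2 (tcons (tnthc (tsub (tsizec c) (tconst 1)) c) (tconst 0)))
        (tbuild chainBody (tsub (tsizec c) (tconst 1)) [:: c])).

Lemma den_tchain c a zs :
  den c a = code_seq zs -> den (tchain c) a = code_seq (map code_lit (chain zs)).
Proof.
move=> Hc; rewrite /tchain /chain; cbn [map code_seq].
rewrite den_tcons (@den_litR _ _ _ [:: nth 0 zs 0]); last first.
  by rewrite den_tcons den_tnthc !den_tconst Hc nthc_code.
rewrite den_tcons (@den_litR _ _ _ [:: last 0 zs]); last first.
  by rewrite den_tcons den_tnthc den_tsub den_tsizec !den_tconst Hc sizec_code nthc_code subn1 nth_last.
rewrite den_tbuild den_tsub den_tsizec den_tconst Hc sizec_code subn1; simpl_env.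
rewrite -map_comp.
suff -> : [seq den chainBody [:: k; den c a] | k <- iota 0 (size zs).-1] =
  [seq code_lit (true, ARel 0 [:: nth 0 zs k; nth 0 zs 0; nth 0 zs k.+1]) | k <- iota 0 (size zs).-1].
  by [].
apply: eq_map => k.
rewrite /chainBody (@den_litR _ _ _ [:: nth 0 zs k; nth 0 zs 0; nth 0 zs k.+1]) //.
by rewrite !den_tcons !den_tnthc den_tS den_tconst !den_tproj; simpl_env; rewrite Hc !nthc_code.
Qed.

Definition uniqBody := (* environment: j :: i :: code zs *)
  tif (teq (tproj 0) (tproj 1)) (tconst 0)
      (tnot (teq (tnthc (tproj 0) (tproj 2)) (tnthc (tproj 1) (tproj 2)))).
Definition tuniq (c : tprf) :=
  tbsum (tbsum uniqBody (tsizec (tproj 1)) [:: tproj 0; tproj 1]) (tsizec c) [:: c].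

Lemma isz_tuniq c a zs : den c a = code_seq zs -> isz (den (tuniq c) a) <-> uniq zs.
Proof.
move=> Hc; rewrite /tuniq isz_tbsumP den_tsizec; simpl_env; rewrite Hc sizec_code.
have Hb i j : isz (den uniqBody [:: j; i; code_seq zs]) = (j == i) || (nth 0 zs j != nth 0 zs i).
  rewrite /uniqBody isz_tif isz_teq !den_tproj; simpl_env.
  by rewrite isz_tnot isz_teq !den_tnthc !den_tproj; simpl_env; rewrite !nthc_code isz_tconst; case: eqP.
have Hrow i : isz (den (tbsum uniqBody (tsizec (tproj 1)) [:: tproj 0; tproj 1]) [:: i; code_seq zs])
    <-> forall j, j < size zs -> (j == i) || (nth 0 zs j != nth 0 zs i).
  by rewrite isz_tbsumP den_tsizec den_tproj sizec_code; simpl_env; split => H j /H; rewrite Hb.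
split => H.
  apply/(uniqP 0) => i j Hi Hj Eij; have /Hrow /(_ j Hj) := H i Hi.
  by rewrite Eij eqxx orbF => /eqP.
move=> i Hi; apply/Hrow => j Hj.
by case: eqP => //= Hne; apply/eqP => E; apply: Hne; exact: (uniqP 0 H).
Qed.

Definition prime_image_enum (Phi : seq literal * literal -> Prop) (y : nat * literal) : Prop :=
  exists alpha, Phi (alpha, y.2) /\ List.Forall (diag L_field (Zp_struct (qF y.1))) alpha.

(* The enumeration is c.e.: search for a rule of [Phi] whose premises lie
   in the (decidable) diagram of Z/q_n. *)
Lemma prime_image_enum_ce Phi : ce_by code_rule Phi -> ce_by code_enum (prime_image_enum Phi).
Proof.
case=> e He.
pose D := tlits (tproj 0) (tq (tfst (tproj 1))).
pose Q := tcpair (tproj 0) (tsnd (tproj 1)).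
have HD alpha m : isz (den D [:: code_seq (map code_lit alpha); m]) <->
    List.Forall (diag L_field (Zp_struct (qF (fstc m)))) alpha.
  by apply: tlits_spec; rewrite ?den_tq ?den_tfst ?den_tproj //; exact: prime_gt0 (qF_prime _).
have HQ s m : den Q [:: s; m] = cpair s (sndc m) by rewrite /Q den_tcpair den_tsnd !den_tproj.
apply: ce_ext (ce_search e D Q) _ => m; split.
  move=> [s [/eqP Hd [v Hv]]].
  have [[alpha l] [Hx HPhi]] : exists x, code_rule x = den Q [:: s; m] /\ Phi x.
    by apply/He; exists v.
  move: Hx; rewrite HQ /code_rule /= => /cpair_inj [Hs Hl].
  exists (fstc m, l); split; first by rewrite /code_enum /= Hl cpair_surj.
  by exists alpha; split => //; apply/HD; rewrite Hs.
move=> [[n l] [Hm [alpha [HPhi Hall]]]]; rewrite /code_enum /= in Hm.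
exists (code_seq (map code_lit alpha)); split.
  by apply/eqP/HD; rewrite -Hm fstc_cpair.
by apply/He; exists (alpha, l); split => //; rewrite HQ -Hm sndc_cpair.
Qed.

Lemma PF_Zp n : PF (Zp_struct (qF n)).
Proof. by exists (qF n); split; [exact: qF_prime | exact: iso_refl]. Qed.

Lemma embedding_gives_friedberg L K Phi : iso_closed L K ->
  comp_embedding L_field L PF K Phi ->
  exists C, subclass L C K /\ infinitely_many_iso_types L C /\
            exists E, friedberg_enumeration L C E.
Proof.
move=> HK [[Hce [_ Himg]] Hemb].
have Hex n : exists B, K B /\ phi_image L_field L Phi (Zp_struct (qF n)) B by exact: Himg (PF_Zp n).
pose img n := proj1_sig (constructive_indefinite_description _ (Hex n)).
have [HimgK Himgn] : (forall n, K (img n)) /\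
    (forall n, phi_image L_field L Phi (Zp_struct (qF n)) (img n)).
  by split => n; case: (proj2_sig (constructive_indefinite_description _ (Hex n))).
have Hinj n m Bn Bm : phi_image L_field L Phi (Zp_struct (qF n)) Bn ->
    phi_image L_field L Phi (Zp_struct (qF m)) Bm -> iso L Bn Bm -> n = m.
  move=> Hn Hm /(Hemb _ _ _ _ (PF_Zp n) (PF_Zp m) Hn Hm).
  by move/(Zp_iso_eq (qF_prime n) (qF_prime m)); exact: qF_inj.
exists (fun B => exists n, iso L (img n) B); split; [split|split].
- by move=> A B [n H1] H2; exists n; exact: iso_trans H1 H2.
- by move=> B [n Hn]; exact: HK (HimgK n) Hn.
- move=> N; exists img; split => [i _|i j _ _]; first by exists i; exact: iso_refl.
  exact: Hinj.
exists (prime_image_enum Phi); split; [split; [exact: prime_image_enum_ce|split]|].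
- by move=> n; exists (img n); split; [exists n; exact: iso_refl | exact: Himgn].
- by move=> A [n Hn]; exists n, (img n); split; [exact: Himgn | exact: iso_sym].
- exact: Hinj.
Qed.

Definition chain_rules (E : nat * literal -> Prop) (x : seq literal * literal) : Prop :=
  exists zs, x.1 = chain zs /\ uniq zs /\ prime (size zs) /\ E (size zs, x.2).

Lemma chain_rules_apply E A p l : prime p -> iso L_field A (Zp_struct p) ->
  (exists alpha, chain_rules E (alpha, l) /\ List.Forall (diag L_field A) alpha) <-> E (p, l).
Proof.
move=> Hp Hiso; split.
  move=> [alpha [[zs [/= -> [Hu [Hpz HE]]]] Hd]].
  by have := chain_length_dvd Hp Hiso Hd (prime_gt0 Hpz); move/(prime_dvd_eq Hp Hpz) ->.
move=> HE; have [zs [Hs [Hu Hd]]] := chain_exists Hp Hiso.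
by exists (chain zs); split => //; exists zs; rewrite Hs.
Qed.

(* The rules are c.e.: decode [zs] and check the premises are its chain. *)
Lemma chain_rules_ce E : ce_by code_enum E -> ce_by code_rule (chain_rules E).
Proof.
case=> e He.
pose D := tadd (teq (tchain (tproj 0)) (tfst (tproj 1)))
               (tadd (tuniq (tproj 0)) (tprime (tsizec (tproj 0)))).
pose Q := tcpair (tsizec (tproj 0)) (tsnd (tproj 1)).
have HD zs r : isz (den D [:: code_seq zs; r]) <->
    [/\ code_seq (map code_lit (chain zs)) = fstc r, uniq zs & prime (size zs)].
  rewrite /D isz_tadd isz_teq isz_tadd isz_tprime den_tsizec den_tfst !den_tproj; simpl_env.
  rewrite (@den_tchain _ _ zs) // sizec_code.
  have Hu := isz_tuniq (c := tproj 0) (a := [:: code_seq zs; r]) erefl.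
  split => [/and3P [/eqP H1 /Hu H2 H3] // | [H1 /Hu H2 H3]].
  by rewrite H1 eqxx H2 H3.
have HQ zs r : den Q [:: code_seq zs; r] = cpair (size zs) (sndc r).
  by rewrite /Q den_tcpair den_tsizec den_tsnd !den_tproj /= sizec_code.
apply: ce_ext (ce_search e D Q) _ => r; split.
  move=> [s [Hd [v Hv]]]; have [zs Hzs] := code_seq_surj s; subst s.
  have [H1 H2 H3] := proj1 (HD zs r) (introT eqP Hd).
  have [[n l] [Hy HE]] : exists y, code_enum y = den Q [:: code_seq zs; r] /\ E y.
    by apply/He; exists v.
  move: Hy; rewrite HQ /code_enum /= => /cpair_inj [Hn Hl]; subst n.
  exists (chain zs, l); split; first by rewrite /code_rule; cbn [fst snd]; rewrite H1 Hl cpair_surj.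
  by exists zs.
move=> [[alpha l] [Hr [zs [/= Ha [Hu [Hpz HE]]]]]]; subst alpha.
exists (code_seq zs); split; first by apply/eqP/HD; split => //; rewrite -Hr fstc_cpair.
by apply/He; exists (size zs, l); split => //; rewrite HQ -Hr sndc_cpair.
Qed.

Lemma friedberg_gives_embedding L K C E : subclass L C K ->
  friedberg_enumeration L C E -> le_c L_field L PF K.
Proof.
move=> [_ HCK] [[Hce [Hall _]] Hfr].
have Hmem A p B : prime p -> iso L_field A (Zp_struct p) ->
    phi_image L_field L (chain_rules E) A B -> enum_member L E p B.
  by move=> Hp Hiso Hph l; rewrite -(chain_rules_apply _ _ Hp Hiso); exact: Hph.
exists (chain_rules E); split; [split; [exact: chain_rules_ce|split]|].
- move=> alpha l [zs [/= -> [Hu [Hpz HE]]]]; split.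
    by have [F1 F2] := chain_model_ok Hu (prime_gt1 Hpz); exists (chain_model zs).
  by have [A [_ HA]] := Hall (size zs); have [] := proj1 (HA l) HE.
- move=> A [p [Hp Hiso]]; have [B [HCB HB]] := Hall p.
  by exists B; split; [exact: HCK | move=> l; rewrite (chain_rules_apply _ _ Hp Hiso); exact: HB].
- move=> A A' B B' [p [Hp Hi]] [p' [Hp' Hi']] HB HB'.
  have M := Hmem _ _ _ Hp Hi HB; have M' := Hmem _ _ _ Hp' Hi' HB'.
  split => H.
    have : iso L_field (Zp_struct p) (Zp_struct p').
      by apply: iso_trans (iso_sym Hi) _; exact: iso_trans H Hi'.
    move/(Zp_iso_eq Hp Hp') => Epp; subst p'.
    by apply: diag_iso => l; rewrite -M -M'.
  have Epp := Hfr _ _ _ _ M M' H; subst p'.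
  by apply: iso_trans Hi _; exact: iso_sym.
Qed.

Theorem theorem3p2 (L : language) (K : structure -> Prop) :
  iso_closed L K ->
  (le_c L_field L PF K <->
   exists C : structure -> Prop,
     subclass L C K /\ infinitely_many_iso_types L C /\
     exists E : nat * literal -> Prop, friedberg_enumeration L C E).
Proof.
move=> HK; split.
  by move=> [Phi HPhi]; exact: embedding_gives_friedberg HK HPhi.
by move=> [C [HC [_ [E HE]]]]; exact: friedberg_gives_embedding HC HE.
Qed.
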